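(* Let $\rho:\Gamma\to\mathrm{Homeo}^+(S^1)$ be a minimal action of a group $\Gamma$, and let $\varphi:S^1\to S^1$ be a non-constant continuous map and $\rho_0:\Gamma\to\mathrm{Homeo}^+(S^1)$ an action with $\varphi\rho(\gamma)=\rho_0(\gamma)\varphi$ for all $\gamma\in\Gamma$. Then $\deg\varphi\neq0$ and $\varphi$ is surjective.
   Context: Minimal: every orbit of $\rho(\Gamma)$ is dense in $S^1$. *)

From Stdlib Require Import Reals Lra ZArith.
Open Scope R_scope.

Definition S1 : Type := {p : R * R | Rsqr (fst p) + Rsqr (snd p) = 1}.
Definition pt (z : S1) : R * R := proj1_sig z.

Definition cdist (z w : S1) : R :=
  sqrt (Rsqr (fst (pt z) - fst (pt w)) + Rsqr (snd (pt z) - snd (pt w))).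

Definition circ_continuous (f : S1 -> S1) : Prop :=
  forall z eps, 0 < eps -> exists delta, 0 < delta /\
    forall w, cdist z w < delta -> cdist (f z) (f w) < eps.

Lemma expc_proof (x : R) :
  Rsqr (cos (2 * PI * x)) + Rsqr (sin (2 * PI * x)) = 1.
Proof. rewrite Rplus_comm; apply sin2_cos2. Qed.

Definition expc (x : R) : S1 :=
  exist _ (cos (2 * PI * x), sin (2 * PI * x)) (expc_proof x).

Definition has_degree (f : S1 -> S1) (d : Z) : Prop :=
  exists F : R -> R, continuity F /\
    (forall x, f (expc x) = expc (F x)) /\
    (forall x, F (x + 1) = F x + IZR d).

Definition circ_homeo (f : S1 -> S1) : Prop :=
  circ_continuous f /\ exists g : S1 -> S1, circ_continuous g /\
    (forall z, g (f z) = z) /\ (forall z, f (g z) = z).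

(* Homeo^+(S^1): orientation-preserving homeomorphisms (degree 1). *)
Definition homeo_plus (f : S1 -> S1) : Prop := circ_homeo f /\ has_degree f 1%Z.

Definition is_group {G : Type} (mul : G -> G -> G) (e : G) (inv : G -> G) : Prop :=
  (forall a b c, mul a (mul b c) = mul (mul a b) c) /\
  (forall a, mul e a = a) /\ (forall a, mul a e = a) /\
  (forall a, mul (inv a) a = e) /\ (forall a, mul a (inv a) = e).

Definition is_action {G : Type} (mul : G -> G -> G) (rho : G -> S1 -> S1) : Prop :=
  (forall g, homeo_plus (rho g)) /\
  (forall g h z, rho (mul g h) z = rho g (rho h z)).

Definition minimal_action {G : Type} (rho : G -> S1 -> S1) : Prop :=
  forall z w eps, 0 < eps -> exists g, cdist (rho g z) w < eps.

(* A continuous circle map lifts to a continuous F : R -> R with F (x + 1) = F x + d, d being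
   its degree.  If d = 0, F is periodic and attains its maximum; as the lifts of orientation
   preserving homeomorphisms are nondecreasing, the semiconjugacy makes the set of points of
   the circle where F is maximal invariant under every rho g.  By minimality this closed set is
   dense, so F and hence phi are constant.  If d <> 0, F maps [0, 1] onto an interval of
   length |d| >= 1, so phi is onto. *)

From Stdlib Require Import Reals ZArith Lra Lia Ranalysis5 ProofIrrelevance.
Open Scope R_scope.

Definition cx (z : S1) : R := fst (pt z).
Definition cy (z : S1) : R := snd (pt z).

Lemma cx2_cy2 z : cx z * cx z + cy z * cy z = 1.
Proof. destruct z as [[a b] H]; exact H. Qed.

Lemma S1_ext z w : cx z = cx w -> cy z = cy w -> z = w.
Proof.
  destruct z as [[a b] H], w as [[a' b'] H']; unfold cx, cy, pt; simpl; intros -> ->.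
  f_equal; apply proof_irrelevance.
Qed.

Lemma cdist_ge0 z w : 0 <= cdist z w.
Proof. apply sqrt_pos. Qed.

Lemma cdist_sym z w : cdist z w = cdist w z.
Proof. unfold cdist; f_equal; unfold Rsqr; ring. Qed.

Lemma abs_cx_sub_le_cdist z w : Rabs (cx z - cx w) <= cdist z w.
Proof.
  unfold cdist; rewrite <- sqrt_Rsqr_abs; apply sqrt_le_1_alt.
  pose proof (Rle_0_sqr (cy z - cy w)); unfold cx, cy in *; lra.
Qed.

Lemma abs_cy_sub_le_cdist z w : Rabs (cy z - cy w) <= cdist z w.
Proof.
  unfold cdist; rewrite <- sqrt_Rsqr_abs; apply sqrt_le_1_alt.
  pose proof (Rle_0_sqr (cx z - cx w)); unfold cx, cy in *; lra.
Qed.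

Lemma cdist_le_abs_add z w : cdist z w <= Rabs (cx z - cx w) + Rabs (cy z - cy w).
Proof.
  pose proof (Rabs_pos (cx z - cx w)); pose proof (Rabs_pos (cy z - cy w)).
  rewrite <- (sqrt_Rsqr (Rabs (cx z - cx w) + Rabs (cy z - cy w))) by lra.
  apply sqrt_le_1_alt; fold (cx z) (cx w) (cy z) (cy w).
  rewrite (Rsqr_abs (cx z - cx w)), (Rsqr_abs (cy z - cy w)); unfold Rsqr; nra.
Qed.

Definition dot (z w : S1) : R := cx z * cx w + cy z * cy w.
Definition cross (z w : S1) : R := cx z * cy w - cy z * cx w.

Lemma dot_cdist z w : dot z w = 1 - (cdist z w)² / 2.
Proof.
  unfold cdist; rewrite Rsqr_sqrt by (apply Rplus_le_le_0_compat; apply Rle_0_sqr).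
  unfold dot, Rsqr; fold (cx z) (cx w) (cy z) (cy w).
  pose proof (cx2_cy2 z); pose proof (cx2_cy2 w); nra.
Qed.

Lemma dot2_cross2 z w : dot z w * dot z w + cross z w * cross z w = 1.
Proof. unfold dot, cross; pose proof (cx2_cy2 z); pose proof (cx2_cy2 w); nra. Qed.

Lemma abs_cross_le_cdist z w : Rabs (cross z w) <= 2 * cdist z w.
Proof.
  pose proof (abs_cx_sub_le_cdist z w); pose proof (abs_cy_sub_le_cdist z w).
  pose proof (cx2_cy2 z).
  assert (Rabs (cx z) <= 1) by (apply Rabs_le; nra).
  assert (Rabs (cy z) <= 1) by (apply Rabs_le; nra).
  replace (cross z w) with (cx z * (cy w - cy z) - cy z * (cx w - cx z)) by (unfold cross; ring).
  eapply Rle_trans; [apply Rabs_triang|]; rewrite Rabs_Ropp, !Rabs_mult.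
  rewrite (Rabs_minus_sym (cy w)), (Rabs_minus_sym (cx w)).
  pose proof (Rabs_pos (cx z)); pose proof (Rabs_pos (cy z)).
  pose proof (Rabs_pos (cx z - cx w)); pose proof (Rabs_pos (cy z - cy w)); nra.
Qed.

Lemma periodic_addZ (A : Type) (h : R -> A) :
  (forall x, h (x + 1) = h x) -> forall k x, h (x + IZR k) = h x.
Proof.
  intros Hh k; induction k as [|k IH|k IH] using Z.peano_ind; intros x.
  - now rewrite Rplus_0_r.
  - rewrite succ_IZR, <- Rplus_assoc, Hh; apply IH.
  - rewrite <- (IH x), <- Hh, <- Z.sub_1_r, minus_IZR; f_equal; simpl; ring.
Qed.

Lemma lift_addZ (H : R -> R) c :
  (forall x, H (x + 1) = H x + c) -> forall k x, H (x + IZR k) = H x + IZR k * c.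
Proof.
  intros HH k x.
  assert (E := periodic_addZ R (fun x => H x - x * c)
                 (fun y => ltac:(cbv beta; rewrite HH; ring)) k x).
  simpl in E; lra.
Qed.

Lemma cx_expc x : cx (expc x) = cos (2 * PI * x).
Proof. reflexivity. Qed.

Lemma cy_expc x : cy (expc x) = sin (2 * PI * x).
Proof. reflexivity. Qed.

Lemma expc_add1 x : expc (x + 1) = expc x.
Proof.
  apply S1_ext; rewrite ?cx_expc, ?cy_expc;
  replace (2 * PI * (x + 1)) with (2 * PI * x + 2 * INR 1 * PI) by (simpl; ring).
  - apply cos_period.
  - apply sin_period.
Qed.

Lemma expc_addZ k x : expc (x + IZR k) = expc x.
Proof. apply periodic_addZ, expc_add1. Qed.

Lemma expc_eq_addZ u v : expc u = expc v -> exists k, u = v + IZR k.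
Proof.
  intros H.
  assert (Hc : cos (2 * PI * u) = cos (2 * PI * v)) by exact (f_equal cx H).
  assert (Hs : sin (2 * PI * u) = sin (2 * PI * v)) by exact (f_equal cy H).
  assert (H1 : cos (2 * (PI * (u - v))) = 1).
  { replace (2 * (PI * (u - v))) with (2 * PI * u - 2 * PI * v) by ring.
    rewrite cos_minus, Hc, Hs; exact (cx2_cy2 (expc v)). }
  rewrite cos_2a_sin in H1.
  destruct (sin_eq_0_0 (PI * (u - v))) as [k Hk]; [nra|].
  exists k; pose proof PI_RGT_0.
  assert (u - v = IZR k) by (apply (Rmult_eq_reg_l PI); [rewrite Hk; ring | lra]).
  lra.
Qed.

Lemma expc_surj z : exists a, expc a = z.
Proof.
  pose proof (cx2_cy2 z) as N; pose proof PI_RGT_0.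
  assert (Hb : -1 <= cx z <= 1) by nra.
  assert (Hs : sqrt (1 - (cx z)²) = Rabs (cy z))
    by (rewrite <- sqrt_Rsqr_abs; f_equal; unfold Rsqr; lra).
  destruct (Rle_dec 0 (cy z)) as [Hp|Hn].
  - exists (acos (cx z) / (2 * PI)); apply S1_ext; rewrite ?cx_expc, ?cy_expc;
    replace (2 * PI * (acos (cx z) / (2 * PI))) with (acos (cx z)) by (field; lra).
    + now apply cos_acos.
    + rewrite sin_acos, Hs by auto; apply Rabs_right; lra.
  - exists (- acos (cx z) / (2 * PI)); apply S1_ext; rewrite ?cx_expc, ?cy_expc;
    replace (2 * PI * (- acos (cx z) / (2 * PI))) with (- acos (cx z)) by (field; lra).
    + rewrite cos_neg; now apply cos_acos.
    + rewrite sin_neg, sin_acos, Hs by auto; rewrite Rabs_left; lra.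
Qed.

Lemma continuity_pt_eps_delta f x : continuity_pt f x -> forall eps, 0 < eps ->
  exists d, 0 < d /\ forall y, Rabs (y - x) < d -> Rabs (f y - f x) < eps.
Proof.
  intros H eps He; destruct (H eps He) as [d [Hd Hy]]; exists d; split; auto.
  intros y Hyx; destruct (Req_dec y x) as [->|Hne].
  - unfold Rminus; rewrite Rplus_opp_r, Rabs_R0; lra.
  - apply (Hy y); split; [split; [exact I | now apply not_eq_sym] | exact Hyx].
Qed.

Lemma expc_continuous x eps : 0 < eps -> exists d, 0 < d /\
  forall y, Rabs (y - x) < d -> cdist (expc x) (expc y) < eps.
Proof.
  intros He.
  assert (Cc : continuity_pt (fun t => cos (2 * PI * t)) x) by reg.
  assert (Cs : continuity_pt (fun t => sin (2 * PI * t)) x) by reg.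
  destruct (continuity_pt_eps_delta _ _ Cc (eps / 2)) as [d1 [Hd1 H1]]; [lra|].
  destruct (continuity_pt_eps_delta _ _ Cs (eps / 2)) as [d2 [Hd2 H2]]; [lra|].
  exists (Rmin d1 d2); split; [now apply Rmin_pos|].
  intros y Hy; pose proof (Rmin_l d1 d2); pose proof (Rmin_r d1 d2).
  eapply Rle_lt_trans; [apply cdist_le_abs_add|]; rewrite !cx_expc, !cy_expc.
  rewrite (Rabs_minus_sym (cos _)), (Rabs_minus_sym (sin _)).
  specialize (H1 y ltac:(lra)); specialize (H2 y ltac:(lra)); lra.
Qed.

Definition path_continuous (g : R -> S1) : Prop :=
  forall x, continuity_pt (fun t => cx (g t)) x /\ continuity_pt (fun t => cy (g t)) x.

Lemma path_continuous_comp_expc f :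
  circ_continuous f -> path_continuous (fun t => f (expc t)).
Proof.
  intros Hf x; split; intros eps He;
    destruct (Hf (expc x) eps He) as [d1 [Hd1 H1]];
    destruct (expc_continuous x d1 Hd1) as [d [Hd H]];
    exists d; split; auto; intros y [_ Hy]; simpl in *; unfold Rdist in *;
    rewrite Rabs_minus_sym; eapply Rle_lt_trans;
    [apply abs_cx_sub_le_cdist | auto | apply abs_cy_sub_le_cdist | auto].
Qed.

Lemma path_continuous_scale g r :
  path_continuous g -> path_continuous (fun t => g (r * t)).
Proof.
  intros Hg x; destruct (Hg (r * x)) as [H1 H2]; split.
  - apply (continuity_pt_comp (fun t => r * t) (fun t => cx (g t))); [reg | exact H1].
  - apply (continuity_pt_comp (fun t => r * t) (fun t => cy (g t))); [reg | exact H2].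
Qed.

(* The signed angle from z to w, as a fraction of a full turn; meaningful when 0 < dot z w. *)
Definition ang (z w : S1) : R := atan (cross z w / dot z w) / (2 * PI).

Lemma expc_add_ang t z w : 0 < dot z w -> expc t = z -> expc (t + ang z w) = w.
Proof.
  intros Hd Ht; pose proof PI_RGT_0.
  set (d := dot z w) in *; set (c := cross z w).
  assert (Hdc : d * d + c * c = 1) by apply dot2_cross2.
  assert (Hsq : sqrt (1 + (c / d)²) = 1 / d).
  { replace (1 + (c / d)²) with ((d * d + c * c) / (d * d)) by (unfold Rsqr; field; lra).
    rewrite Hdc; replace (1 / (d * d)) with ((1 / d)²) by (unfold Rsqr; field; lra).
    apply sqrt_Rsqr, Rlt_le, Rdiv_lt_0_compat; lra. }
  assert (Hcos : cos (atan (c / d)) = d) by (rewrite cos_atan, Hsq; field; lra).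
  assert (Hsin : sin (atan (c / d)) = c) by (rewrite sin_atan, Hsq; field; lra).
  assert (E : 2 * PI * (t + ang z w) = 2 * PI * t + atan (c / d))
    by (unfold ang; fold d c; field; lra).
  pose proof (cx2_cy2 z) as Nz.
  apply S1_ext; rewrite ?cx_expc, ?cy_expc, E.
  - rewrite cos_plus, Hcos, Hsin, <- cx_expc, <- cy_expc, Ht; unfold d, c, dot, cross.
    transitivity (cx w * (cx z * cx z + cy z * cy z)); [ring | rewrite Nz; ring].
  - rewrite sin_plus, Hcos, Hsin, <- cx_expc, <- cy_expc, Ht; unfold d, c, dot, cross.
    transitivity (cy w * (cx z * cx z + cy z * cy z)); [ring | rewrite Nz; ring].
Qed.

Lemma ang_diag z : ang z z = 0.
Proof.
  unfold ang; replace (cross z z) with 0 by (unfold cross; ring).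
  unfold Rdiv; rewrite Rmult_0_l, atan_0; ring.
Qed.

Lemma ang_continuous_pt u v x :
  path_continuous u -> path_continuous v -> 0 < dot (u x) (v x) ->
  continuity_pt (fun t => ang (u t) (v t)) x.
Proof.
  intros Hu Hv Hd; destruct (Hu x) as [Hu1 Hu2], (Hv x) as [Hv1 Hv2]; unfold ang.
  apply (continuity_pt_comp (fun t => cross (u t) (v t) / dot (u t) (v t))
           (fun r => atan r / (2 * PI))).
  - apply continuity_pt_div; unfold cross, dot in *; [| | lra].
    + apply (continuity_pt_minus (fun t => cx (u t) * cy (v t)) (fun t => cy (u t) * cx (v t)));
        apply continuity_pt_mult; assumption.
    + apply (continuity_pt_plus (fun t => cx (u t) * cx (v t)) (fun t => cy (u t) * cy (v t)));
        apply continuity_pt_mult; assumption.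
  - apply derivable_continuous_pt; reg; apply derivable_pt_atan.
Qed.

Lemma expc_near_addZ y eta : 0 < eta -> exists eps, 0 < eps /\
  forall u, cdist (expc u) (expc y) < eps -> exists j, Rabs (u - IZR j - y) < eta.
Proof.
  intros He; pose proof PI_RGT_0.
  destruct (continuity_pt_eps_delta atan 0
              (derivable_continuous_pt _ _ (derivable_pt_atan 0)) (2 * PI * eta))
    as [ze [Hze Hz]]; [nra|].
  exists (Rmin 1 (ze / 4)); split; [apply Rmin_pos; lra|].
  intros u Hu; pose proof (Rmin_l 1 (ze / 4)); pose proof (Rmin_r 1 (ze / 4)).
  rewrite cdist_sym in Hu; pose proof (cdist_ge0 (expc y) (expc u)).
  set (d := dot (expc y) (expc u)); set (c := cross (expc y) (expc u)).
  assert (Hd : d > 1 / 2).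
  { unfold d; rewrite dot_cdist; unfold Rsqr; set (r := cdist _ _) in *.
    assert (r * r < 1) by nra. lra. }
  assert (Hc : Rabs c <= 2 * cdist (expc y) (expc u)) by apply abs_cross_le_cdist.
  destruct (expc_eq_addZ _ _ (eq_sym (expc_add_ang y (expc y) (expc u) ltac:(fold d; lra) eq_refl)))
    as [j Hj].
  exists j; replace (u - IZR j - y) with (ang (expc y) (expc u)) by lra.
  assert (Hcd : Rabs (c / d - 0) < ze).
  { rewrite Rminus_0_r; unfold Rdiv; rewrite Rabs_mult, Rabs_inv, (Rabs_right d) by lra.
    apply (Rmult_lt_reg_r d); [lra|].
    replace (Rabs c * / d * d) with (Rabs c) by (field; lra); nra. }
  specialize (Hz _ Hcd); rewrite atan_0, Rminus_0_r in Hz.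
  unfold ang; fold c d; unfold Rdiv.
  rewrite Rabs_mult, Rabs_inv, (Rabs_right (2 * PI)) by lra.
  apply (Rmult_lt_reg_r (2 * PI)); [lra|].
  replace (Rabs (atan (c * / d)) * / (2 * PI) * (2 * PI)) with (Rabs (atan (c * / d)))
    by (field; lra).
  lra.
Qed.

Lemma ivt_up f a b v : a <= b -> (forall s, a <= s <= b -> continuity_pt f s) ->
  f a <= v <= f b -> exists c, a <= c <= b /\ f c = v.
Proof.
  intros Hab Hc Hv.
  destruct (Req_dec (f a) v) as [Ea|Ea]; [exists a; split; [lra | exact Ea]|].
  destruct (Req_dec (f b) v) as [Eb|Eb]; [exists b; split; [lra | exact Eb]|].
  destruct (Req_dec a b) as [<-|Hne]; [lra|].
  destruct (IVT_interv (fun s => f s - v) a b) as [c [Hcab Hfc]]; try lra.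
  - intros s Hs; apply (continuity_pt_minus f (fun _ => v)); [now apply Hc|].
    now apply continuity_pt_const.
  - exists c; split; [exact Hcab | lra].
Qed.

Lemma ivt_between f x y v : (forall s, Rmin x y <= s <= Rmax x y -> continuity_pt f s) ->
  (f x <= v <= f y \/ f y <= v <= f x) -> exists s, Rmin x y <= s <= Rmax x y /\ f s = v.
Proof.
  assert (Hord : forall a b, a <= b -> (forall s, a <= s <= b -> continuity_pt f s) ->
            (f a <= v <= f b \/ f b <= v <= f a) -> exists s, a <= s <= b /\ f s = v).
  { intros a b Hab Hc [Hv|Hv]; [now apply ivt_up|].
    destruct (ivt_up (fun s => - f s) a b (- v)) as [c [Hcab Hfc]]; [exact Hab| |lra|].
    - intros s Hs; apply (continuity_pt_opp f); now apply Hc.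
    - exists c; split; [exact Hcab | lra]. }
  intros Hc Hv; destruct (Rle_dec x y).
  - rewrite Rmin_left, Rmax_right in * by lra; now apply Hord.
  - rewrite Rmin_right, Rmax_left in * by lra; apply Hord; [lra | exact Hc | tauto].
Qed.

Lemma IZR_neq_IZR_add_half k m : IZR k <> IZR m + 1 / 2.
Proof.
  intros E; assert (IZR (2 * (k - m)) = IZR 1) by (rewrite mult_IZR, minus_IZR; simpl; lra).
  apply eq_IZR in H; lia.
Qed.

Lemma integer_valued_continuous_const D c t :
  (forall s, Rmin c t <= s <= Rmax c t -> continuity_pt D s /\ exists k : Z, D s = IZR k) ->
  D t = D c.
Proof.
  intros H.
  assert (Hcont : forall s, Rmin c t <= s <= Rmax c t -> continuity_pt D s)
    by (intros s Hs; now apply H).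
  destruct (H c) as [_ [kc Hkc]]; [split; [apply Rmin_l | apply Rmax_l]|].
  destruct (H t) as [_ [kt Hkt]]; [split; [apply Rmin_r | apply Rmax_r]|].
  destruct (Z.eq_dec kc kt) as [->|Hne]; [congruence|].
  (* A value halfway between consecutive integers would be taken in between. *)
  assert (Hhalf : forall m, D c <= IZR m + 1 / 2 <= D t \/ D t <= IZR m + 1 / 2 <= D c ->
            False).
  { intros m Hm; destruct (ivt_between D c t _ Hcont Hm) as [s [Hs Ds]].
    destruct (H s Hs) as [_ [k Hk]]; apply (IZR_neq_IZR_add_half k m); congruence. }
  destruct (Z_lt_le_dec kc kt) as [Hl|Hl].
  - assert (IZR kc + 1 <= IZR kt) by (rewrite <- plus_IZR; apply IZR_le; lia).
    exfalso; apply (Hhalf kc); left; lra.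
  - assert (IZR kt + 1 <= IZR kc) by (rewrite <- plus_IZR; apply IZR_le; lia).
    exfalso; apply (Hhalf kt); right; lra.
Qed.

Lemma lift_unique L1 L2 c t :
  (forall s, Rmin c t <= s <= Rmax c t ->
     continuity_pt L1 s /\ continuity_pt L2 s /\ expc (L1 s) = expc (L2 s)) ->
  L1 c = L2 c -> L1 t = L2 t.
Proof.
  intros H Hc.
  enough (E : L1 t - L2 t = L1 c - L2 c) by lra.
  apply (integer_valued_continuous_const (fun s => L1 s - L2 s)); intros s Hs.
  destruct (H s Hs) as [H1 [H2 H3]]; split.
  - now apply continuity_pt_minus.
  - destruct (expc_eq_addZ _ _ H3) as [k Hk]; exists k; lra.
Qed.

Section PathLifting.

Variable g : R -> S1.
Hypothesis g_cont : path_continuous g.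
Hypothesis g_periodic : forall x, g (x + 1) = g x.

Lemma dot_uniformly_pos :
  exists del, 0 < del /\ forall x y, Rabs (x - y) < del -> 0 < dot (g x) (g y).
Proof.
  (* Uniform continuity on [-1, 2], which contains a period around any pair of close points. *)
  destruct (Heine (fun t => cx (g t)) (fun c => -1 <= c <= 2) (compact_P3 _ _)
     (fun x _ => proj1 (g_cont x)) (mkposreal (1 / 2) ltac:(lra))) as [d1 H1].
  destruct (Heine (fun t => cy (g t)) (fun c => -1 <= c <= 2) (compact_P3 _ _)
     (fun x _ => proj2 (g_cont x)) (mkposreal (1 / 2) ltac:(lra))) as [d2 H2].
  pose proof (cond_pos d1); pose proof (cond_pos d2).
  exists (Rmin (Rmin d1 d2) 1); split; [repeat apply Rmin_pos; lra|].
  intros x y Hxy.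
  pose proof (Rmin_l (Rmin d1 d2) 1); pose proof (Rmin_r (Rmin d1 d2) 1).
  pose proof (Rmin_l d1 d2); pose proof (Rmin_r d1 d2).
  destruct (base_Int_part x) as [B1 B2]; set (n := Int_part x) in *.
  rewrite <- (periodic_addZ _ g g_periodic (- n) x), <- (periodic_addZ _ g g_periodic (- n) y).
  rewrite opp_IZR.
  assert (Hd : Rabs ((x + - IZR n) - (y + - IZR n)) = Rabs (x - y)) by (f_equal; ring).
  destruct (Rabs_def2 _ _ Hxy).
  assert (Hx : -1 <= x + - IZR n <= 2) by lra.
  assert (Hy : -1 <= y + - IZR n <= 2) by lra.
  specialize (H1 _ _ Hx Hy ltac:(rewrite Hd; lra)).
  specialize (H2 _ _ Hx Hy ltac:(rewrite Hd; lra)); simpl in H1, H2.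
  pose proof (cdist_le_abs_add (g (x + - IZR n)) (g (y + - IZR n))).
  pose proof (cdist_ge0 (g (x + - IZR n)) (g (y + - IZR n))).
  rewrite dot_cdist; unfold Rsqr; set (r := cdist _ _) in *.
  assert (r * r < 1) by nra; lra.
Qed.

Variable del : R.
Hypothesis del_pos : 0 < del.
Hypothesis dot_pos : forall x y, Rabs (x - y) < del -> 0 < dot (g x) (g y).
Variable a : R.
Hypothesis expc_a : expc a = g 0.

Fixpoint ang_sum (N k : nat) (x : R) : R :=
  match k with
  | O => 0
  | S i => ang_sum N i x + ang (g (INR i / INR N * x)) (g (INR (S i) / INR N * x))
  end.

Lemma dot_step_pos N i x : 0 < INR N -> Rabs x < INR N * del ->
  0 < dot (g (INR i / INR N * x)) (g (INR (S i) / INR N * x)).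
Proof.
  intros HN Hx; apply dot_pos.
  replace (INR i / INR N * x - INR (S i) / INR N * x) with (- (x / INR N))
    by (rewrite S_INR; field; lra).
  rewrite Rabs_Ropp; unfold Rdiv; rewrite Rabs_mult, Rabs_inv, (Rabs_right (INR N)) by lra.
  apply (Rmult_lt_reg_l (INR N)); [exact HN|].
  replace (INR N * (Rabs x * / INR N)) with (Rabs x) by (field; lra); lra.
Qed.

Lemma expc_add_ang_sum N x : 0 < INR N -> Rabs x < INR N * del ->
  forall k, (k <= N)%nat -> expc (a + ang_sum N k x) = g (INR k / INR N * x).
Proof.
  intros HN Hx k; induction k as [|k IH]; intros Hk; cbn [ang_sum].
  - rewrite Rplus_0_r, expc_a; f_equal; simpl; unfold Rdiv; ring.
  - rewrite <- Rplus_assoc; apply expc_add_ang; [now apply dot_step_pos | apply IH; lia].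
Qed.

Lemma ang_sum_continuous_pt N x : 0 < INR N -> Rabs x < INR N * del ->
  forall k, continuity_pt (ang_sum N k) x.
Proof.
  intros HN Hx k; induction k as [|k IH]; cbn [ang_sum].
  - now apply continuity_pt_const.
  - apply (continuity_pt_plus (ang_sum N k)); [exact IH|].
    apply (ang_continuous_pt (fun t => g (INR k / INR N * t)) (fun t => g (INR (S k) / INR N * t)));
      [apply path_continuous_scale, g_cont | apply path_continuous_scale, g_cont |].
    now apply dot_step_pos.
Qed.

Lemma ang_sum_0 N k : ang_sum N k 0 = 0.
Proof.
  induction k as [|k IH]; cbn [ang_sum]; [reflexivity|].
  rewrite IH, !Rmult_0_r, ang_diag; ring.
Qed.

Lemma ang_sum_indep N M x : 0 < INR N -> 0 < INR M ->
  Rabs x < INR N * del -> Rabs x < INR M * del -> ang_sum N N x = ang_sum M M x.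
Proof.
  intros HN HM HxN HxM.
  enough (E : a + ang_sum N N x = a + ang_sum M M x) by lra.
  apply (lift_unique (fun s => a + ang_sum N N s) (fun s => a + ang_sum M M s) 0 x).
  - intros s Hs.
    assert (Rabs s <= Rabs x).
    { destruct (Rle_dec 0 x).
      - rewrite Rmin_left, Rmax_right in Hs by lra; rewrite !Rabs_right by lra; lra.
      - rewrite Rmin_right, Rmax_left in Hs by lra; rewrite !Rabs_left1 by lra; lra. }
    split; [|split].
    + apply (continuity_pt_plus (fun _ => a)); [now apply continuity_pt_const|].
      apply ang_sum_continuous_pt; lra.
    + apply (continuity_pt_plus (fun _ => a)); [now apply continuity_pt_const|].
      apply ang_sum_continuous_pt; lra.
    + rewrite !expc_add_ang_sum by (auto; lra); f_equal; field; lra.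
  - now rewrite !ang_sum_0.
Qed.

Definition nsteps (x : R) : nat := S (Z.to_nat (up (Rabs x / del))).

Lemma nsteps_spec x : 0 < INR (nsteps x) /\ Rabs x < INR (nsteps x) * del.
Proof.
  unfold nsteps; rewrite S_INR; set (z := up (Rabs x / del)).
  assert (IZR z <= INR (Z.to_nat z)).
  { destruct (Z_le_gt_dec 0 z).
    - rewrite INR_IZR_INZ, Z2Nat.id by lia; lra.
    - pose proof (pos_INR (Z.to_nat z)); assert (IZR z < 0) by (apply IZR_lt; lia); lra. }
  destruct (archimed (Rabs x / del)) as [A _]; fold z in A.
  pose proof (pos_INR (Z.to_nat z)); pose proof (Rabs_pos x).
  split; [lra|].
  replace (Rabs x) with (Rabs x / del * del) at 1 by (field; lra).
  apply Rmult_lt_compat_r; lra.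
Qed.

Definition lift (x : R) : R := a + ang_sum (nsteps x) (nsteps x) x.

Lemma lift_continuous : continuity lift.
Proof.
  intros x; destruct (nsteps_spec (Rabs x + 1)) as [HM HxM].
  set (M := nsteps (Rabs x + 1)) in *.
  rewrite Rabs_right in HxM by (pose proof (Rabs_pos x); lra).
  (* Near x, the number of steps may be frozen at M. *)
  apply (continuity_pt_locally_ext (fun s => a + ang_sum M M s) _ 1 x); [lra| |].
  - intros y Hy; unfold lift, Rdist in *; destruct (nsteps_spec y) as [Hy1 Hy2].
    f_equal; apply ang_sum_indep; auto.
    pose proof (Rabs_triang_inv y x); lra.
  - apply (continuity_pt_plus (fun _ => a)); [now apply continuity_pt_const|].
    apply ang_sum_continuous_pt; [exact HM | pose proof (Rabs_pos x); lra].
Qed.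

Lemma expc_lift x : g x = expc (lift x).
Proof.
  destruct (nsteps_spec x) as [H1 H2]; unfold lift.
  rewrite expc_add_ang_sum by auto; f_equal; field; lra.
Qed.

End PathLifting.

Lemma circ_continuous_has_degree f : circ_continuous f -> exists d, has_degree f d.
Proof.
  intros Hf; set (g := fun x => f (expc x)).
  assert (Hper : forall x, g (x + 1) = g x) by (intros; unfold g; now rewrite expc_add1).
  assert (Hg := path_continuous_comp_expc f Hf).
  destruct (dot_uniformly_pos g Hg Hper) as [del [Hdel Hdot]].
  destruct (expc_surj (g 0)) as [a Ha].
  set (F := lift g del a).
  assert (Fc : continuity F) by now apply lift_continuous.
  assert (Fl : forall x, g x = expc (F x)) by (intros; now apply expc_lift).
  destruct (expc_eq_addZ (F (0 + 1)) (F 0)) as [d Hd]; [rewrite <- !Fl; apply Hper|].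
  exists d, F; split; [exact Fc | split; [exact Fl|]]; intros x.
  enough (E : F (x + 1) - F x = F (0 + 1) - F 0) by lra.
  apply (integer_valued_continuous_const (fun s => F (s + 1) - F s)); intros s _; split.
  - apply (continuity_pt_minus (fun s => F (s + 1)) F); [|apply Fc].
    apply (continuity_pt_comp (fun t => t + 1) F s); [reg | apply Fc].
  - destruct (expc_eq_addZ (F (s + 1)) (F s)) as [k Hk]; [rewrite <- !Fl; apply Hper|].
    exists k; lra.
Qed.

Lemma injective_degree_one_lift_nondecreasing (h : S1 -> S1) (H : R -> R) :
  continuity H -> (forall x, h (expc x) = expc (H x)) -> (forall x, H (x + 1) = H x + IZR 1) ->
  (forall z w, h z = h w -> z = w) -> forall a b, a <= b -> H a <= H b.
Proof.
  intros Hc Hl H1 Hinj.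
  assert (HZ := lift_addZ H (IZR 1) H1).
  assert (Hinj' : forall a b, H a = H b -> a = b).
  { intros a b E; destruct (expc_eq_addZ a b) as [k ->]; [apply Hinj; now rewrite !Hl, E|].
    rewrite HZ in E; assert (IZR k = 0) by (simpl in E; lra); lra. }
  intros a b Hab; apply Rnot_lt_le; intros Hlt.
  (* H would take the value H a again on [b, b + n], after one more full turn. *)
  destruct (archimed (H a - H b)) as [Hup _]; set (n := up (H a - H b)) in *.
  destruct (ivt_up H b (b + IZR n) (H a)) as [c [Hcb Hca]].
  - lra.
  - intros; apply Hc.
  - rewrite HZ; simpl; lra.
  - apply Hinj' in Hca; destruct (Req_dec a b) as [->|]; lra.
Qed.

Lemma periodic_continuous_attains_max F :
  continuity F -> (forall x, F (x + 1) = F x) -> exists x0, forall y, F y <= F x0.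
Proof.
  intros Fc Fp.
  destruct (continuity_ab_maj F 0 1) as [x0 [Hmax _]]; [lra | intros; apply Fc|].
  exists x0; intros y; destruct (base_Int_part y) as [B1 B2].
  replace y with ((y - IZR (Int_part y)) + IZR (Int_part y)) by ring.
  rewrite (periodic_addZ R F Fp); apply Hmax; lra.
Qed.

(* The lift H0 of h0 is nondecreasing and F o H - H0 o F is constant, so H sends maximum points
   of F to maximum points. *)
Lemma degree_zero_max_set_invariant phi h h0 F x0 :
  homeo_plus h -> homeo_plus h0 -> (forall z, phi (h z) = h0 (phi z)) ->
  continuity F -> (forall x, phi (expc x) = expc (F x)) -> (forall x, F (x + 1) = F x) ->
  (forall y, F y <= F x0) -> forall x, expc x = h (expc x0) -> F x = F x0.
Proof.
  intros [[_ [hi [_ [_ Hhi]]]] [H [Hc [Hl _]]]] [[_ [h0i [_ [Hh0i _]]]] [H0 [H0c [H0l H01]]]]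
    Hsemi Fc Fl Fp Hmax.
  assert (Hmono : forall a b, a <= b -> H0 a <= H0 b).
  { apply (injective_degree_one_lift_nondecreasing h0); auto.
    intros z w E; now rewrite <- (Hh0i z), <- (Hh0i w), E. }
  assert (Hconst : forall x, F (H x) - H0 (F x) = F (H x0) - H0 (F x0)).
  { intros x; apply (integer_valued_continuous_const (fun s => F (H s) - H0 (F s)));
      intros s _; split.
    - apply (continuity_pt_minus (fun s => F (H s)) (fun s => H0 (F s))).
      + apply (continuity_pt_comp H F s); [apply Hc | apply Fc].
      + apply (continuity_pt_comp F H0 s); [apply Fc | apply H0c].
    - destruct (expc_eq_addZ (F (H s)) (H0 (F s))) as [k Hk].
      + now rewrite <- Fl, <- Hl, Hsemi, Fl, H0l.
      + exists k; lra. }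
  assert (HFx0 : F (H x0) = F x0).
  { destruct (expc_surj (hi (expc x0))) as [y1 Hy1].
    destruct (expc_eq_addZ (H y1) x0) as [j Hj]; [now rewrite <- Hl, Hy1, Hhi|].
    assert (F (H y1) = F x0) by now rewrite Hj, (periodic_addZ R F Fp).
    pose proof (Hconst y1); pose proof (Hmono (F y1) (F x0) (Hmax y1)).
    pose proof (Hmax (H x0)); lra. }
  intros x Hx; rewrite Hl in Hx.
  destruct (expc_eq_addZ _ _ Hx) as [k ->]; now rewrite (periodic_addZ R F Fp).
Qed.

Lemma semiconj_minimal_degree_zero_constant (G : Type) (rho rho0 : G -> S1 -> S1) phi :
  (forall g, homeo_plus (rho g)) -> minimal_action rho -> (forall g, homeo_plus (rho0 g)) ->
  (forall g z, phi (rho g z) = rho0 g (phi z)) -> has_degree phi 0 ->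
  forall z w, phi z = phi w.
Proof.
  intros Hrho Hmin Hrho0 Hsemi [F [Fc [Fl F1]]].
  assert (Fp : forall x, F (x + 1) = F x) by (intros x; rewrite F1; exact (Rplus_0_r _)).
  destruct (periodic_continuous_attains_max F Fc Fp) as [x0 Hmax].
  enough (HF : forall y, F y = F x0).
  { intros z w; destruct (expc_surj z) as [s <-], (expc_surj w) as [t <-].
    now rewrite !Fl, (HF s), (HF t). }
  intros y; apply Rle_antisym; [apply Hmax|]; apply Rnot_lt_le; intros Hy.
  (* Minimality moves x0 close to y modulo 1, where F is still below its maximum. *)
  destruct (continuity_pt_eps_delta F y (Fc y) (F x0 - F y)) as [eta [Heta Hnear]]; [lra|].
  destruct (expc_near_addZ y eta Heta) as [eps [Heps Hclose]].
  destruct (Hmin (expc x0) (expc y) eps Heps) as [g Hg].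
  destruct (expc_surj (rho g (expc x0))) as [u Hu]; rewrite <- Hu in Hg.
  destruct (Hclose u Hg) as [j Hj].
  assert (Fu : F u = F x0)
    by exact (degree_zero_max_set_invariant phi (rho g) (rho0 g) F x0
                (Hrho g) (Hrho0 g) (Hsemi g) Fc Fl Fp Hmax u Hu).
  specialize (Hnear (u - IZR j) Hj).
  replace (u - IZR j) with (u + IZR (- j)) in Hnear by (rewrite opp_IZR; ring).
  rewrite (periodic_addZ R F Fp), Fu in Hnear; pose proof (Rle_abs (F x0 - F y)); lra.
Qed.

Lemma nonzero_degree_surjective f d : has_degree f d -> d <> 0%Z -> forall w, exists z, f z = w.
Proof.
  intros [F [Fc [Fl F1]]] Hd w; destruct (expc_surj w) as [b <-].
  assert (Hgap : 1 <= Rabs (F 1 - F 0)).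
  { replace (F 1) with (F (0 + 1)) by (f_equal; ring).
    rewrite F1, Rplus_minus_l, Rabs_Zabs; apply IZR_le; lia. }
  set (m := Rmin (F 0) (F 1)); destruct (archimed (m - b)) as [A1 A2].
  destruct (ivt_between F 0 1 (b + IZR (up (m - b)))) as [x [_ Fx]].
  - intros; apply Fc.
  - unfold m in *; destruct (Rle_dec (F 0) (F 1)).
    + rewrite Rmin_left in * by lra; rewrite Rabs_right in Hgap by lra; left; lra.
    + rewrite Rmin_right in * by lra; rewrite Rabs_left in Hgap by lra; right; lra.
  - exists (expc x); now rewrite Fl, Fx, expc_addZ.
Qed.

Theorem lemma3p8 (G : Type) (mul : G -> G -> G) (e : G) (inv : G -> G)
  (rho rho0 : G -> S1 -> S1) (phi : S1 -> S1) :
  is_group mul e inv ->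
  is_action mul rho -> minimal_action rho ->
  is_action mul rho0 ->
  circ_continuous phi ->
  (exists z w, phi z <> phi w) ->
  (forall g z, phi (rho g z) = rho0 g (phi z)) ->
  (exists d : Z, has_degree phi d /\ d <> 0%Z) /\
  (forall w, exists z, phi z = w).
Proof.
  intros _ [Hrho _] Hmin [Hrho0 _] Hphi [z0 [w0 Hz0w0]] Hsemi.
  destruct (circ_continuous_has_degree phi Hphi) as [d Hd].
  assert (Hd0 : d <> 0%Z).
  { intros ->; apply Hz0w0.
    exact (semiconj_minimal_degree_zero_constant G rho rho0 phi Hrho Hmin Hrho0 Hsemi Hd z0 w0). }
  split; [now exists d|].
  exact (nonzero_degree_surjective phi d Hd Hd0).
Qed.
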